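(* Let $\mathbb{C}$ be a category with pullbacks, $\mathrm{I}$ a set, and $\mathscr{U}=(U,(U_i,\iota_i)_{i\in\mathrm{I}})$ a sink in $\mathbb{C}$. Let $\mathbf{G}:\mathbb{S}_2(\mathrm{I})^{op}\to\mathbb{C}$ be a functor with $\mathbf{G}(i)=U_i$ for all $i\in\mathrm{I}$, and suppose $\mathbf{G}$ has a colimit cocone $(U,(\lambda_x)_{x\in\mathbb{S}_2(\mathrm{I})})$ with $\lambda_i=\iota_i$ for all $i\in\mathrm{I}$. Then $(U,(\mu_x)_{x})$, where $\mu_i:=\iota_i$ and $\mu_{(i,j)}:=\iota_i\circ\mathrm{pr}_1:U_i\times_UU_j\to U$, is a colimit cocone of the canonical functor $\mathbf{D}_{\mathscr{U}}:\mathbb{S}_2(\mathrm{I})^{op}\to\mathbb{C}$ associated with $\mathscr{U}$.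
   Context: A sink to $U$ in $\mathbb{C}$ is a family of morphisms $\iota_i:U_i\to U$, $i\in\mathrm{I}$. For a set $\mathrm{I}$, $\mathbb{S}_2(\mathrm{I})$ (the split truncated power set category of order 2) is the category whose objects are the elements $i\in\mathrm{I}$ and the ordered pairs $(i,j)\in\mathrm{I}^2$, generated by morphisms $\mathfrak{i}^s_{i,j}:i\to(i,j)$ for all $i,j\in\mathrm{I}$ (including $i=j$) and isomorphisms $\tau_{i,j}:(i,j)\to(j,i)$ with $\tau_{i,j}^{-1}=\tau_{j,i}$ (with $\tau_{i,i}$ a non-identity involution), with no further relations; thus the non-identity morphisms are the $\tau_{i,j}$, the $\mathfrak{i}^s_{i,j}$, and the composites $\tau_{i,j}\circ\mathfrak{i}^s_{i,j}:i\to(j,i)$. For a functor $\mathbf{G}:\mathbb{S}_2(\mathrm{I})^{op}\to\mathbb{C}$, a cocone with apex $L$ is a family $\lambda_x:\mathbf{G}(x)\to L$ with $\lambda_x\circ\mathbf{G}(f)=\lambda_y$ for every $f:x\to y$ in $\mathbb{S}_2(\mathrm{I})$. The canonical functor $\mathbf{D}_{\mathscr{U}}:\mathbb{S}_2(\mathrm{I})^{op}\to\mathbb{C}$ is given by $\mathbf{D}_{\mathscr{U}}(i)=U_i$, $\mathbf{D}_{\mathscr{U}}((i,j))=U_i\times_UU_j$ (pullback of $\iota_i,\iota_j$), $\mathbf{D}_{\mathscr{U}}(\mathfrak{i}^s_{i,j})=\mathrm{pr}_1:U_i\times_UU_j\to U_i$, and $\mathbf{D}_{\mathscr{U}}(\tau_{i,j}):U_j\times_UU_i\to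 U_i\times_UU_j$ the canonical swap isomorphism. *)

Set Implicit Arguments.
Set Universe Polymorphism.

Record Category : Type := {
  Obj :> Type;
  Hom : Obj -> Obj -> Type;
  idm : forall a, Hom a a;
  comp : forall a b c, Hom b c -> Hom a b -> Hom a c;
  comp_idl : forall a b (f : Hom a b), comp (idm b) f = f;
  comp_idr : forall a b (f : Hom a b), comp f (idm a) = f;
  comp_assoc : forall a b c d (h : Hom c d) (g : Hom b c) (f : Hom a b),
      comp h (comp g f) = comp (comp h g) f
}.
Arguments Hom {C} a b : rename.
Arguments idm {C} a : rename.
Arguments comp {C a b c} g f : rename.

Record Pullback (C : Category) (A B Z : C) (f : Hom A Z) (g : Hom B Z) : Type := {
  pb_obj : C;
  pb_pr1 : Hom pb_obj A;
  pb_pr2 : Hom pb_obj B;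
  pb_comm : comp f pb_pr1 = comp g pb_pr2;
  pb_lift : forall Q (q1 : Hom Q A) (q2 : Hom Q B), comp f q1 = comp g q2 -> Hom Q pb_obj;
  pb_lift_pr1 : forall Q q1 q2 (e : comp f q1 = comp g q2), comp pb_pr1 (@pb_lift Q q1 q2 e) = q1;
  pb_lift_pr2 : forall Q q1 q2 (e : comp f q1 = comp g q2), comp pb_pr2 (@pb_lift Q q1 q2 e) = q2;
  pb_lift_unique : forall Q (h k : Hom Q pb_obj),
      comp pb_pr1 h = comp pb_pr1 k -> comp pb_pr2 h = comp pb_pr2 k -> h = k
}.

Arguments Pullback {C A B Z} f g.
Arguments pb_obj {C A B Z f g} p.
Arguments pb_pr1 {C A B Z f g} p.
Arguments pb_pr2 {C A B Z f g} p.
Arguments pb_comm {C A B Z f g} p.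
Arguments pb_lift {C A B Z f g} p {Q} q1 q2 e.

Definition HasPullbacks (C : Category) : Type :=
  forall (A B Z : C) (f : Hom A Z) (g : Hom B Z), Pullback f g.

(** Morphisms: exactly the identities, i^s_{i,j} : i -> (i,j),
    tau_{i,j} : (i,j) -> (j,i), and tau_{i,j} o i^s_{i,j} : i -> (j,i). *)
Inductive S2obj (I : Type) : Type :=
| S2pt : I -> S2obj I
| S2pair : I -> I -> S2obj I.
Arguments S2pt {I} i.
Arguments S2pair {I} i j.

Inductive S2hom (I : Type) : S2obj I -> S2obj I -> Type :=
| s2id : forall x, S2hom x x
| s2inc : forall i j, S2hom (S2pt i) (S2pair i j)
| s2tau : forall i j, S2hom (S2pair i j) (S2pair j i)
| s2tauinc : forall i j, S2hom (S2pt i) (S2pair j i).   (* = tau_{i,j} o i^s_{i,j} *)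
Arguments s2id {I} x.
Arguments s2inc {I} i j.
Arguments s2tau {I} i j.
Arguments s2tauinc {I} i j.

Record S2Diagram (C : Category) (I : Type) : Type := {
  dobj : S2obj I -> C;
  dmap : forall x y, S2hom x y -> Hom (dobj y) (dobj x)
}.
Arguments dobj {C I} s _ : rename.
Arguments dmap {C I} s {x y} _ : rename.

(** Functoriality of a diagram S_2(I)^op -> C: preservation of identities
    and of the full composition table of S_2(I):
      tau_{j,i} o tau_{i,j} = id_{(i,j)},
      tau_{i,j} o i^s_{i,j} = (tau o i^s)_{i,j},
      tau_{j,i} o (tau o i^s)_{i,j} = i^s_{i,j}
    (all other composites involve an identity). *)
Definition is_S2functor (C : Category) (I : Type) (F : S2Diagram C I) : Prop :=
  (forall x, dmap F (s2id x) = idm (dobj F x)) /\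
  (forall i j, comp (dmap F (s2tau i j)) (dmap F (s2tau j i)) = idm (dobj F (S2pair i j))) /\
  (forall i j, dmap F (s2tauinc i j) = comp (dmap F (s2inc i j)) (dmap F (s2tau i j))) /\
  (forall i j, comp (dmap F (s2tauinc i j)) (dmap F (s2tau j i)) = dmap F (s2inc i j)).

Definition is_cocone (C : Category) (I : Type) (F : S2Diagram C I) (L : C)
    (lam : forall x, Hom (dobj F x) L) : Prop :=
  forall x y (f : S2hom x y), comp (lam x) (dmap F f) = lam y.

Arguments is_cocone {C I} F {L} lam.

Definition is_colimit (C : Category) (I : Type) (F : S2Diagram C I) (L : C)
    (lam : forall x, Hom (dobj F x) L) : Prop :=
  is_cocone F lam /\
  forall (L' : C) (lam' : forall x, Hom (dobj F x) L'), is_cocone F lam' ->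
    exists h : Hom L L', (forall x, comp h (lam x) = lam' x) /\
      forall h' : Hom L L', (forall x, comp h' (lam x) = lam' x) -> h' = h.

Section Canonical.
Variables (C : Category) (pb : HasPullbacks C) (I : Type) (U : C)
          (Ui : I -> C) (iota : forall i, Hom (Ui i) U).

Definition DU_obj (x : S2obj I) : C :=
  match x with
  | S2pt i => Ui i
  | S2pair i j => pb_obj (pb _ _ _ (iota i) (iota j))
  end.

Definition DU_swap (i j : I) : Hom (DU_obj (S2pair j i)) (DU_obj (S2pair i j)) :=
  pb_lift (pb _ _ _ (iota i) (iota j)) (pb_pr2 (pb _ _ _ (iota j) (iota i)))
          (pb_pr1 (pb _ _ _ (iota j) (iota i)))
          (eq_sym (pb_comm (pb _ _ _ (iota j) (iota i)))).

Definition DU_map (x y : S2obj I) (f : S2hom x y) : Hom (DU_obj y) (DU_obj x) :=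
  match f in S2hom x y return Hom (DU_obj y) (DU_obj x) with
  | s2id x => idm (DU_obj x)
  | s2inc i j => pb_pr1 (pb _ _ _ (iota i) (iota j))
  | s2tau i j => DU_swap i j
  | s2tauinc i j => comp (pb_pr1 (pb _ _ _ (iota i) (iota j))) (DU_swap i j)
  end.

Definition DU : S2Diagram C I := {| dobj := DU_obj; dmap := DU_map |}.

Definition DU_mu (x : S2obj I) : Hom (dobj DU x) U :=
  match x return Hom (dobj DU x) U with
  | S2pt i => iota i
  | S2pair i j => comp (iota i) (pb_pr1 (pb _ _ _ (iota i) (iota j)))
  end.
End Canonical.
Arguments is_colimit {C I} F {L} lam.

(* A cocone [lam'] over [D_U] equalizes the two legs of every commutative square over the
   cospan [iota_j, iota_i], since such a square factors through the pullback and [lam'] is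
   compatible with both projections (the second one via the swap).  The colimit cocone of
   [G] identifies [G(i)] with [U_i] over [U], so the double-overlap object [G((j,i))]
   yields such a square; hence [lam'] restricts along [G] to a cocone over [G], and the
   factorization through the colimit of [G] is the factorization required for [D_U]. *)

Lemma existT_eq_split_over {C : Category} {U : C} {p q : sigT (fun X : C => Hom X U)} :
  p = q -> { c : Hom (projT1 p) (projT1 q) & { d : Hom (projT1 q) (projT1 p) |
    comp c d = idm _ /\ comp (projT2 q) c = projT2 p } }.
Proof.
  intros <-. exists (idm _), (idm _). split; [apply comp_idl | apply comp_idr].
Qed.

Section CanonicalCocones.
Context {C : Category} (pb : HasPullbacks C) {I : Type} {U : C}
        {Ui : I -> C} (iota : forall i, Hom (Ui i) U).

Local Notation P i j := (pb _ _ _ (iota i) (iota j)).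
Local Notation D := (DU pb U Ui iota).

(* The ascription unfolds [DU_obj] in the type of [DU_swap], so that the lemma rewrites
   in goals whose objects are phrased with [pb_obj]. *)
Lemma DU_swap_pr1 i j :
  comp (pb_pr1 (P i j)) (DU_swap pb U Ui iota i j : Hom (pb_obj (P j i)) _) = pb_pr2 (P j i).
Proof. apply pb_lift_pr1. Qed.

Lemma DU_mu_cocone : is_cocone D (DU_mu pb U Ui iota).
Proof.
  intros x y f; destruct f as [x|i j|i j|i j]; simpl.
  - apply comp_idr.
  - reflexivity.
  - rewrite <- comp_assoc, DU_swap_pr1. symmetry; apply pb_comm.
  - rewrite DU_swap_pr1. symmetry; apply pb_comm.
Qed.

Lemma DU_cocone_pr1_pr2 {L : C} {lam' : forall x, Hom (dobj D x) L} i j :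
  is_cocone D lam' ->
  comp (lam' (S2pt j)) (pb_pr1 (P j i)) = comp (lam' (S2pt i)) (pb_pr2 (P j i)).
Proof.
  intros Hc.
  transitivity (lam' (S2pair j i)); [exact (Hc _ _ (s2inc j i))|].
  rewrite <- (Hc _ _ (s2tauinc i j)); simpl.
  apply f_equal, DU_swap_pr1.
Qed.

Lemma DU_cocone_square {L : C} {lam' : forall x, Hom (dobj D x) L} {i j : I}
    {Q : C} {q1 : Hom Q (Ui j)} {q2 : Hom Q (Ui i)} :
  is_cocone D lam' -> comp (iota j) q1 = comp (iota i) q2 ->
  comp (lam' (S2pt j)) q1 = comp (lam' (S2pt i)) q2.
Proof.
  intros Hc e.
  set (k := pb_lift (P j i) q1 q2 e).
  transitivity (comp (lam' (S2pt j)) (comp (pb_pr1 (P j i)) k));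
    [apply f_equal; symmetry; apply pb_lift_pr1|].
  transitivity (comp (lam' (S2pt i)) (comp (pb_pr2 (P j i)) k));
    [|apply f_equal, pb_lift_pr2].
  rewrite !comp_assoc. apply (f_equal (fun t => comp t k)), (DU_cocone_pr1_pr2 i j Hc).
Qed.

Section TransferFromG.
Variables (G : S2Diagram C I) (lam : forall x, Hom (dobj G x) U)
          (c : forall i, Hom (dobj G (S2pt i)) (Ui i))
          (d : forall i, Hom (Ui i) (dobj G (S2pt i))).
Hypotheses (G_id : forall x, dmap G (s2id x) = idm (dobj G x))
           (G_tauinc : forall i j, dmap G (s2tauinc i j) = comp (dmap G (s2inc i j)) (dmap G (s2tau i j)))
           (lam_colim : is_colimit G lam)
           (c_d : forall i, comp (c i) (d i) = idm (Ui i))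
           (iota_c : forall i, comp (iota i) (c i) = lam (S2pt i)).

Definition restrict_cocone {L : C} (lam' : forall x, Hom (dobj D x) L) x : Hom (dobj G x) L :=
  match x return Hom (dobj G x) L with
  | S2pt i => comp (lam' (S2pt i)) (c i)
  | S2pair i j => comp (comp (lam' (S2pt i)) (c i)) (dmap G (s2inc i j))
  end.

Lemma restrict_cocone_tauinc {L : C} {lam' : forall x, Hom (dobj D x) L} i j :
  is_cocone D lam' ->
  comp (restrict_cocone lam' (S2pt i)) (dmap G (s2tauinc i j))
  = restrict_cocone lam' (S2pair j i).
Proof.
  intros Hc; simpl. rewrite <- !comp_assoc.
  symmetry; apply (DU_cocone_square Hc).
  rewrite !comp_assoc, !iota_c, (proj1 lam_colim _ _ (s2inc j i)).
  symmetry; apply (proj1 lam_colim _ _ (s2tauinc i j)).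
Qed.

Lemma restrict_cocone_is_cocone {L : C} {lam' : forall x, Hom (dobj D x) L} :
  is_cocone D lam' -> is_cocone G (restrict_cocone lam').
Proof.
  intros Hc x y f; destruct f as [x|i j|i j|i j].
  - rewrite G_id. apply comp_idr.
  - reflexivity.
  - simpl. rewrite <- comp_assoc, <- G_tauinc. apply (restrict_cocone_tauinc i j Hc).
  - apply (restrict_cocone_tauinc i j Hc).
Qed.

Lemma factor_DU_iff {L : C} {lam' : forall x, Hom (dobj D x) L} (h : Hom U L) :
  is_cocone D lam' ->
  (forall x, comp h (DU_mu pb U Ui iota x) = lam' x) <->
  (forall x, comp h (lam x) = restrict_cocone lam' x).
Proof.
  intros Hc; split; intros Hh.
  - assert (Hpt : forall i, comp h (lam (S2pt i)) = restrict_cocone lam' (S2pt i)).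
    { intro i; simpl. rewrite <- iota_c, comp_assoc. f_equal. exact (Hh (S2pt i)). }
    intros [i|i j]; [apply Hpt|].
    rewrite <- (proj1 lam_colim _ _ (s2inc i j)), comp_assoc, Hpt. reflexivity.
  - assert (Hpt : forall i, comp h (iota i) = lam' (S2pt i)).
    { intro i.
      transitivity (comp (comp h (comp (iota i) (c i))) (d i)).
      { rewrite <- !comp_assoc, c_d, comp_idr. reflexivity. }
      rewrite iota_c, Hh; simpl. rewrite <- comp_assoc, c_d. apply comp_idr. }
    intros [i|i j]; [apply Hpt|]; simpl.
    rewrite comp_assoc, Hpt. exact (Hc _ _ (s2inc i j)).
Qed.

Lemma DU_mu_colimit_of_split : is_colimit D (DU_mu pb U Ui iota).
Proof.
  split; [exact DU_mu_cocone|].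
  intros L lam' Hc.
  destruct (proj2 lam_colim L _ (restrict_cocone_is_cocone Hc)) as [h [Hh Huniq]].
  exists h; split.
  - apply (factor_DU_iff h Hc), Hh.
  - intros h' Hh'. apply Huniq, (factor_DU_iff h' Hc), Hh'.
Qed.

End TransferFromG.
End CanonicalCocones.

Theorem mainTheorem5 (C : Category) (pb : HasPullbacks C) (I : Type)
    (U : C) (Ui : I -> C) (iota : forall i, Hom (Ui i) U)
    (G : S2Diagram C I) (HG : is_S2functor G)
    (lam : forall x, Hom (dobj G x) U)
    (Hlam : is_colimit G lam)
    (Hi : forall i, existT (fun X : C => Hom X U) (dobj G (S2pt i)) (lam (S2pt i))
                    = existT (fun X : C => Hom X U) (Ui i) (iota i)) :
  is_colimit (@DU C pb I U Ui iota) (@DU_mu C pb I U Ui iota).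
Proof.
  destruct HG as [G_id [_ [G_tauinc _]]].
  pose (split_i := fun i => existT_eq_split_over (Hi i)).
  exact (DU_mu_colimit_of_split pb iota G lam
           (fun i => projT1 (split_i i)) (fun i => proj1_sig (projT2 (split_i i)))
           G_id G_tauinc Hlam
           (fun i => proj1 (proj2_sig (projT2 (split_i i))))
           (fun i => proj2 (proj2_sig (projT2 (split_i i))))).
Qed.
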